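(* Assume (in $V$) $\mathfrak b=\aleph_1$ with the family $\{g_\alpha:\alpha<\omega_1\}$ fixed as below. Let $X\subseteq{}^\omega 2$, $X\in V$, with $|X|\ge\aleph_1$, let $G=\langle X\rangle$ be the subgroup generated by $X$, and let $\bar{\mathcal T}\in V$ be a $G$-matrix with $\mathcal T=\bigcup_\alpha\mathcal T_\alpha$. Let $\dot z$ be a Cohen-forcing ($\mathbb C$-)name such that the trivial condition forces $\dot z\in{}^\omega 2\setminus V$. Then there is $x\in X$ such that the trivial condition forces $\dot z\notin x+[T]$ for all $T\in\mathcal T$.
   Context: ${}^\omega 2$ is the Cantor space with bitwise addition modulo $2$. $\mathbb S$ is the set of perfect subtrees of ${}^{<\omega}2$ ordered by inclusion; $[T]$ is the set of branches of $T$ (evaluated in the extension); for $x\in{}^\omega 2$, $x+T=\{\sigma+x\restriction|\sigma|:\sigma\in T\}$. A node $\sigma\in T$ is splitting if $\sigma^\frown0,\sigma^\frown1\in T$; $T$ is skew if for each $n$ there is at most one splitting node of length $n$. The splitting predecessors of $s\in T$ are the splitting nodes of $T$ properly contained in $s$; $h_T(n)=\min\{k:\text{some node of }T\text{ of length }k\text{ has }n\text{ splitting predecessors}\}$. $g\le^* f$ means $g(n)\le f(n)$ for almost all $n$. $\{g_\alpha:\alpha<\omega_1\}\subseteq{}^\omega\omega$ satisfies $\alpha<\beta\Rightarrow g_\alpha\le^* g_\beta$ and for every $f\in{}^\omega\omega$ there is $\alpha$ with $g_\alpha\not\le^* f$. $S$ is somewhere dense in $T$ if there is $s\in T$ with $T_s=\{t\in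 T:t\subseteq s\lor s\subseteq t\}\subseteq S$. A $G$-matrix is a sequence $\langle\mathcal T_\alpha:\alpha<\omega_1\rangle$ with $\mathcal T=\bigcup_\alpha\mathcal T_\alpha$ such that: (i) $\mathcal T\subseteq\mathbb S$ consists of skew trees; (ii) $g_\alpha\le^* h_T$ for all $T\in\mathcal T_\alpha$; (iii) for all $S\neq T$ in $\mathcal T_\alpha$ and all $x\in G$, $x+S$ and $T$ are incompatible; (iv) for every $T\in\mathbb S$ the set $\{(x,S)\in G\times\mathcal T: x+S\text{ is somewhere dense in }T\}$ is at most countable. *)

From Stdlib Require Import ClassicalEpsilon.
From mathcomp Require Import all_boot.
Set Implicit Arguments. Unset Strict Implicit. Unset Printing Implicit Defensive.

Definition real := nat -> bool.
Definition node := seq bool.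
Definition tree := node -> bool.

Definition radd (x y : real) : real := fun n => addb (x n) (y n).
Definition rzero : real := fun _ => false.

Definition gen_group (X : real -> Prop) (z : real) : Prop :=
  exists l : seq real, (forall i, (i < size l)%N -> X (nth rzero l i)) /\ z = foldr radd rzero l.

Definition is_tree (T : tree) : Prop :=
  T [::] /\ forall s i, T s -> T (take i s).

Definition splitting (T : tree) (s : node) : bool :=
  [&& T s, T (rcons s false) & T (rcons s true)].

Definition perfect (T : tree) : Prop :=
  is_tree T /\ forall s, T s -> exists t, prefix s t /\ splitting T t.

Definition skew (T : tree) : Prop :=
  forall s t, splitting T s -> splitting T t -> size s = size t -> s = t.

Definition nsplit (T : tree) (s : node) : nat :=
  count (fun i => splitting T (take i s)) (iota 0 (size s)).

Definition hT_prop (T : tree) (n k : nat) : Prop :=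
  exists s, T s /\ size s = k /\ nsplit T s = n.

Definition hT (T : tree) (n : nat) : nat :=
  epsilon (inhabits 0%N)
    (fun k => hT_prop T n k /\ forall j, hT_prop T n j -> (k <= j)%N).

Definition le_star (g f : nat -> nat) : Prop :=
  exists N, forall n, (N <= n)%N -> (g n <= f n)%N.

(* x + T = { sigma + x|_{|sigma|} : sigma in T } *)
Definition add_restr (x : real) (s : node) : node :=
  mkseq (fun i => addb (nth false s i) (x i)) (size s).
Definition shift_tree (x : real) (T : tree) : tree :=
  fun s => T (add_restr x s).

Definition compatible (S T : tree) : Prop :=
  exists R, perfect R /\ (forall s, R s -> S s) /\ (forall s, R s -> T s).

Definition somewhere_dense (S T : tree) : Prop :=
  exists s, T s /\ forall t, T t -> (prefix t s || prefix s t) -> S t.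

Definition countable_set (U : Type) (P : U -> Prop) : Prop :=
  exists e : nat -> option U, forall u, P u -> exists n, e n = Some u.

Definition is_omega1 (A : Type) (lt : A -> A -> Prop) : Prop :=
  well_founded lt /\
  (forall a b c, lt a b -> lt b c -> lt a c) /\
  (forall a, ~ lt a a) /\
  (forall a b, lt a b \/ a = b \/ lt b a) /\
  (forall a, countable_set (fun b => lt b a)) /\
  ~ countable_set (fun _ : A => True).

Definition G_matrix (A : Type) (g : A -> nat -> nat) (G : real -> Prop)
    (Tm : A -> tree -> Prop) : Prop :=
  (forall a T, Tm a T -> perfect T /\ skew T) /\
  (forall a T, Tm a T -> le_star (g a) (hT T)) /\
  (forall a S T x, Tm a S -> Tm a T -> S <> T -> G x ->
                 ~ compatible (shift_tree x S) T) /\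
  (forall T, perfect T ->
                countable_set (fun p : real * tree =>
                  G p.1 /\ (exists a, Tm a p.2) /\ somewhere_dense (shift_tree p.1 p.2) T)).

(* ----- Cohen forcing C = ^{<omega}2, q <= p iff p is a prefix of q ----- *)
Definition cext (q p : node) : Prop := prefix p q.

(* A C-name for a subset of omega x 2, as a nice name: name k i r means
   ((k,i), r) belongs to the name. *)
Definition cname := nat -> bool -> node -> Prop.

Definition forces_bit (z : cname) (q : node) (k : nat) (i : bool) : Prop :=
  forall r, cext r q -> exists r', cext r' r /\ exists r0, cext r' r0 /\ z k i r0.

Definition forces_real (z : cname) : Prop :=
  forall k, (forall p, exists q, cext q p /\ exists i, forces_bit z q k i) /\
            (forall q, ~ (forces_bit z q k true /\ forces_bit z q k false)).

(* 1 forces zdot notin V (i.e. zdot differs from every ground model real) *)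
Definition forces_new (z : cname) : Prop :=
  forall y : real, forall p, exists q, cext q p /\ exists k, forces_bit z q k (~~ y k).

(* 1 forces zdot notin [T'] (branches of T' computed in the extension) *)
Definition forces_notin_body (z : cname) (T' : tree) : Prop :=
  forall p, exists q, cext q p /\ exists s : node, ~~ T' s /\
    forall k, (k < size s)%N -> forces_bit z q k (nth false s k).

(* For a Cohen condition p let T_p be the tree of those s that some q <= p
   forces to be an initial segment of z.  Since z is forced to be a new real,
   two extensions of any q decide some bit of z differently, so T_p is perfect.
   By clause (iv) of the G-matrix, for each of the countably many p only
   countably many pairs (x, S) have x + S somewhere dense in T_p; as X is
   uncountable, some x in X occurs in none of them.  If some p forced z into
   x + [T], then T_p would be contained in x + T, hence x + T would be dense in
   T_p. *)

From mathcomp Require Import all_boot boolp.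
Set Implicit Arguments. Unset Strict Implicit. Unset Printing Implicit Defensive.

Lemma countable_set_sub (U : Type) (P Q : U -> Prop) :
  (forall u, P u -> Q u) -> countable_set Q -> countable_set P.
Proof. by move=> PQ [e He]; exists e => u /PQ /He. Qed.

Lemma countable_set_fst (U V : Type) (P : U * V -> Prop) :
  countable_set P -> countable_set (fun u => exists v, P (u, v)).
Proof.
move=> [e He]; exists (fun n => omap fst (e n)) => u [v /He [n en]].
by exists n; rewrite en.
Qed.

Lemma countable_set_bigcup (I : countType) (U : Type) (P : I -> U -> Prop) :
  (forall i, countable_set (P i)) -> countable_set (fun u => exists i, P i u).
Proof.
move=> /choice [e He].
exists (fun m => if unpickle m is Some (i, n) then e i n else None).
move=> u [i /He [n en]]; exists (pickle (i, n)).
by rewrite pickleK.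
Qed.

Lemma gen_group_self (X : real -> Prop) x : X x -> gen_group X x.
Proof.
move=> Xx; exists [:: x]; split; first by case.
by apply: funext => n; rewrite /= /radd /rzero addbF.
Qed.

Lemma somewhere_dense_sub (S T : tree) :
  T [::] -> (forall s, T s -> S s) -> somewhere_dense S T.
Proof. by move=> T0 TS; exists [::]; split=> // t /TS. Qed.

Lemma first_mismatch (u v : seq bool) : size u = size v -> u <> v ->
  exists m, [/\ m < size u, take m u = take m v & nth false u m != nth false v m].
Proof.
elim: u v => [|a u IHu] [|b v] //= [size_uv] neq_uv.
have [eq_ab | neq_ab] := eqVneq a b; last by exists 0; split.
have neq_uv' : u <> v by move=> eq_uv; apply: neq_uv; rewrite eq_ab eq_uv.
have [m [lt_m take_m nth_m]] := IHu v size_uv neq_uv'.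
by exists m.+1; split; rewrite /= ?take_m ?eq_ab.
Qed.

Lemma splitting_of_mismatch (T : tree) (s u v : node) :
  (forall w i, T w -> T (take i w)) -> T u -> T v ->
  size u = size v -> u <> v -> prefix s u -> prefix s v ->
  exists t, prefix s t /\ splitting T t.
Proof.
move=> T_take Tu Tv size_uv neq_uv; rewrite !prefixE => /eqP su /eqP sv.
have [m [lt_mu take_uv nth_uv]] := first_mismatch size_uv neq_uv.
have le_sm : size s <= m.
  rewrite leqNgt; apply: contraNN nth_uv => lt_ms.
  by rewrite -(nth_take false lt_ms u) -(nth_take false lt_ms v) su sv.
exists (take m u); split; first by rewrite prefixE take_takel // su.
have lt_mv : m < size v by rewrite -size_uv.
have Tu' := T_take _ m.+1 Tu; have Tv' := T_take _ m.+1 Tv.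
rewrite (take_nth false) // in Tu'; rewrite (take_nth false) // -take_uv in Tv'.
rewrite /splitting T_take //=.
by case: (nth false u m) (nth false v m) nth_uv Tu' Tv' => [] [] // _ -> ->.
Qed.

Lemma cext_trans q r p : cext q r -> cext r p -> cext q p.
Proof. by move=> qr rp; apply: prefix_trans rp qr. Qed.

Definition forces_prefix (z : cname) (q s : node) : Prop :=
  forall k, k < size s -> forces_bit z q k (nth false s k).

Definition cohen_tree (z : cname) (p : node) : tree :=
  fun s => `[< exists q, cext q p /\ forces_prefix z q s >].

Section CohenTree.

Variable z : cname.
Hypothesis z_real : forces_real z.
Hypothesis z_new : forces_new z.

Lemma forces_bit_ext q q' k i : forces_bit z q k i -> cext q' q -> forces_bit z q' k i.
Proof. by move=> qki q'q r rq'; apply: qki; apply: cext_trans rq' q'q. Qed.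

Lemma forces_prefix_ext q q' s : forces_prefix z q s -> cext q' q -> forces_prefix z q' s.
Proof. by move=> qs q'q k lt_k; apply: forces_bit_ext (qs k lt_k) q'q. Qed.

Lemma forces_prefix_take q s i : forces_prefix z q s -> forces_prefix z q (take i s).
Proof.
move=> qs k; rewrite size_take_min ltn_min => /andP [lt_ki lt_ks].
by rewrite nth_take //; apply: qs.
Qed.

Lemma forces_bit_unique q k i j : forces_bit z q k i -> forces_bit z q k j -> i = j.
Proof. by case: i j => [] [] // qi qj; case: ((z_real k).2 q); split. Qed.

Lemma forces_prefix_exists q n :
  exists q' u, [/\ cext q' q, size u = n & forces_prefix z q' u].
Proof.
elim: n => [|n [q' [u [q'q size_u q'u]]]].
  by exists q, [::]; split=> //; apply: prefix_refl.
have [q'' [q''q' [i q''i]]] := (z_real n).1 q'.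
exists q'', (rcons u i); split; first exact: cext_trans q''q' q'q.
  by rewrite size_rcons size_u.
move=> k; rewrite size_rcons ltnS leq_eqVlt => /orP [/eqP -> | lt_k].
  by rewrite nth_rcons size_u ltnn eqxx.
by rewrite nth_rcons lt_k; apply: forces_bit_ext (q'u k lt_k) q''q'.
Qed.

Lemma forces_prefix_extend q s n : forces_prefix z q s -> size s <= n ->
  exists q' u, [/\ cext q' q, size u = n, prefix s u & forces_prefix z q' u].
Proof.
move=> qs le_sn; have [q' [u [q'q size_u q'u]]] := forces_prefix_exists q n.
exists q', u; split=> //; rewrite prefixE; apply/eqP.
apply: (eq_from_nth (x0 := false)); first by rewrite size_takel // size_u.
move=> k; rewrite size_takel ?size_u // => lt_ks.
have lt_ku : k < size u by rewrite size_u; apply: leq_trans le_sn.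
by rewrite nth_take //; apply: forces_bit_unique (q'u k lt_ku) (forces_prefix_ext qs q'q lt_ks).
Qed.

(* The ground-model real y reads off bits that extensions of q can force;
   newness of z then yields an extension of q forcing z to differ from y. *)
Lemma forces_bit_split q : exists k b q1 q2,
  [/\ cext q1 q, cext q2 q, forces_bit z q1 k b & forces_bit z q2 k (~~ b)].
Proof.
pose y : real := fun k => `[< exists q', cext q' q /\ forces_bit z q' k true >].
have y_forced k : exists q', cext q' q /\ forces_bit z q' k (y k).
  rewrite /y; case: asboolP => [// | no_true].
  have [q' [q'q [[] q'i]]] := (z_real k).1 q; last by exists q'.
  by case: no_true; exists q'.
have [q1 [q1q [k q1k]]] := z_new y q; have [q2 [q2q q2k]] := y_forced k.
by exists k, (~~ y k), q1, q2; rewrite negbK.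
Qed.

Lemma cohen_tree_take p s i : cohen_tree z p s -> cohen_tree z p (take i s).
Proof.
by move=> /asboolP [q [qp qs]]; apply/asboolP; exists q; split=> //; apply: forces_prefix_take.
Qed.

Lemma cohen_tree_split p s : cohen_tree z p s ->
  exists t, prefix s t /\ splitting (cohen_tree z p) t.
Proof.
move=> /asboolP [q [qp qs]].
have [k [b [q1 [q2 [q1q q2q q1k q2k]]]]] := forces_bit_split q.
have le_sL : size s <= maxn (size s) k.+1 by apply: leq_maxl.
have lt_kL : k < maxn (size s) k.+1 by rewrite leq_max ltnSn orbT.
have [qu [u [quq1 size_u su quu]]] := forces_prefix_extend (forces_prefix_ext qs q1q) le_sL.
have [qv [v [qvq2 size_v sv qvv]]] := forces_prefix_extend (forces_prefix_ext qs q2q) le_sL.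
have u_k : nth false u k = b.
  by apply: forces_bit_unique (quu k _) (forces_bit_ext q1k quq1); rewrite size_u.
have v_k : nth false v k = ~~ b.
  by apply: forces_bit_unique (qvv k _) (forces_bit_ext q2k qvq2); rewrite size_v.
apply: (splitting_of_mismatch (u := u) (v := v)) => //.
- exact: cohen_tree_take.
- by apply/asboolP; exists qu; split=> //; apply: cext_trans quq1 (cext_trans q1q qp).
- by apply/asboolP; exists qv; split=> //; apply: cext_trans qvq2 (cext_trans q2q qp).
- by rewrite size_u size_v.
- by move=> eq_uv; move: v_k; rewrite -eq_uv u_k; case: (b).
Qed.

Lemma cohen_tree_nil p : cohen_tree z p [::].
Proof. by apply/asboolP; exists p; split=> //; apply: prefix_refl. Qed.

Lemma cohen_tree_perfect p : perfect (cohen_tree z p).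
Proof.
split; last exact: cohen_tree_split.
by split; [apply: cohen_tree_nil | move=> s i; apply: cohen_tree_take].
Qed.

End CohenTree.

Lemma cohen_tree_sub (z : cname) (T : tree) : ~ forces_notin_body z T ->
  exists p, forall s, cohen_tree z p s -> T s.
Proof.
move=> not_notin; apply: contrapT => no_p; apply: not_notin => p.
apply: contrapT => no_q; apply: no_p; exists p => s /asboolP [q [qp qs]].
by case: (boolP (T s)) => // notTs; case: no_q; exists q; split=> //; exists s.
Qed.

Theorem lemma4p4 (A : Type) (lt : A -> A -> Prop) (g : A -> nat -> nat)
  (X : real -> Prop) (Tm : A -> tree -> Prop) (z : cname) :
  is_omega1 lt ->
  (forall a b, lt a b -> le_star (g a) (g b)) ->
  (forall f : nat -> nat, exists a, ~ le_star (g a) f) ->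
  ~ countable_set X ->
  G_matrix g (gen_group X) Tm ->
  forces_real z ->
  forces_new z ->
  exists x, X x /\ forall T, (exists a, Tm a T) -> forces_notin_body z (shift_tree x T).
Proof.
move=> _ _ _ X_unc [_ [_ [_ dense_countable]]] z_real z_new.
apply: contrapT => no_x; apply: X_unc.
pose dense_in p (xT : real * tree) := [/\ gen_group X xT.1, exists a, Tm a xT.2
  & somewhere_dense (shift_tree xT.1 xT.2) (cohen_tree z p)].
apply: (@countable_set_sub _ _ (fun x => exists p, exists T, dense_in p (x, T))).
  move=> x Xx.
  have [T [TmT not_notin]] : exists T, (exists a, Tm a T) /\
      ~ forces_notin_body z (shift_tree x T).
    apply: contrapT => all_notin; apply: no_x; exists x; split=> // T TmT.
    by apply: contrapT => not_notin; apply: all_notin; exists T.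
  have [p sub_p] := cohen_tree_sub not_notin.
  exists p, T; split=> //; first exact: gen_group_self.
  exact: somewhere_dense_sub (cohen_tree_nil z p) sub_p.
apply: countable_set_bigcup => p; apply: countable_set_fst.
apply: countable_set_sub (dense_countable _ (cohen_tree_perfect z_real z_new p)).
by move=> xT [? ? ?].
Qed.
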